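(* Let $|\psi\rangle,|\phi\rangle,|e\rangle,|f\rangle$ be unit vectors in $\mathbb{C}^2$ and let $$\tau=\frac12\left((|\psi\rangle\langle\psi|)^T\otimes|e\rangle\langle e|+(|\phi\rangle\langle\phi|)^T\otimes|f\rangle\langle f|\right).$$ Then the singular values of $N(\tau)$ are $$|\langle\psi|\phi\rangle||\langle e|f\rangle|,\quad\sqrt{(1-|\langle\psi|\phi\rangle|^2)(1-|\langle e|f\rangle|^2)},\quad 0.$$
   Context: $^T$ denotes transpose with respect to the computational basis $\{|0\rangle,|1\rangle\}$. The correlation matrix of an operator $X$ on $\mathbb{C}^2\otimes\mathbb{C}^2$ is the real $3\times3$ matrix $N(X)_{ij}=\operatorname{tr}[X(\sigma_i\otimes\sigma_j)]$, $i,j\in\{1,2,3\}$, with $\sigma_i$ the Pauli matrices. *)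

(* Complex scalars: an arbitrary numClosedFieldType C
   (algebraically closed field with conjugation, e.g. the complex numbers). *)
From HB Require Import structures.
From mathcomp Require Import all_boot all_order all_algebra.
From mathcomp Require Import mxtens.
Set Implicit Arguments. Unset Strict Implicit. Unset Printing Implicit Defensive.
Import Order.TTheory GRing.Theory Num.Theory.
Local Open Scope ring_scope.

Section QDefs.
Variable C : numClosedFieldType.

Definition conjmx m n (A : 'M[C]_(m, n)) : 'M[C]_(m, n) := map_mx Num.conj A.
Definition adjmx m n (A : 'M[C]_(m, n)) : 'M[C]_(n, m) := (conjmx A)^T.

Definition braket (u v : 'cV[C]_2) : C := \sum_(i < 2) (u i 0)^* * v i 0.

Definition unit_vec (u : 'cV[C]_2) : Prop := braket u u = 1.

Definition ketbra (u : 'cV[C]_2) : 'M[C]_2 := u *m adjmx u.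

(* Pauli matrices sigma_1, sigma_2, sigma_3, indexed by k : 'I_3 (k = 0,1,2) *)
Definition pauli (k : 'I_3) : 'M[C]_2 :=
  \matrix_(a < 2, b < 2)
    if (k : nat) == 0%N then (if (a : nat) == b then 0 else 1)
    else if (k : nat) == 1%N then
      (if (a : nat) == b then 0 else if (a : nat) == 0%N then - 'i else 'i)
    else (if (a : nat) == b then (if (a : nat) == 0%N then 1 else -1) else 0).

Definition corr_mx (X : 'M[C]_(2 * 2)) : 'M[C]_3 :=
  \matrix_(i < 3, j < 3) \tr (X *m (pauli i *t pauli j)).

(* s_1,...,s_n are the singular values (with multiplicity) of A:
   they are nonnegative and their squares are the eigenvalues (with
   multiplicity) of A^* A, i.e. char_poly (A^* A) = prod_i (X - s_i^2). *)
Definition singular_values n (A : 'M[C]_n) (s : n.-tuple C) : Prop :=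
  (forall i : 'I_n, 0 <= tnth s i) /\
  char_poly (adjmx A *m A) = \prod_(i < n) ('X - ((tnth s i) ^+ 2)%:P).

End QDefs.

From Pilot Require Import Defs.
From HB Require Import structures.
From mathcomp Require Import all_boot all_order all_algebra.
From mathcomp Require Import mxtens ring.
Set Implicit Arguments. Unset Strict Implicit. Unset Printing Implicit Defensive.
Import Order.TTheory GRing.Theory Num.Theory.
Local Open Scope ring_scope.

(* With a(P)_k = tr(P sigma_k) the Bloch coordinates of a 2x2 matrix P, Pauli
   completeness gives a(P).a(Q) = 2 tr(PQ) - tr P tr Q.  Hence the Bloch
   vectors a, c of psi, phi (transposed) and b, d of e, f are real, of square
   norm 1, with a.c = 2p - 1 and b.d = 2q - 1 where p = |<psi|phi>|^2 and
   q = |<e|f>|^2.  Now N(tau) = (a b^T + c d^T)/2 has rank at most 2, so the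
   characteristic polynomial of N^T N is X (X^2 - t X + s), where the trace t
   and the second invariant s are Gram expressions in these inner products:
   t = pq + (1-p)(1-q) and s = pq (1-p)(1-q). *)

Definition dot3 (R : pzSemiRingType) (x y : 'I_3 -> R) : R := \sum_(k < 3) x k * y k.

(* [ring] sees [A ord0 ord0] and [A 0 0] as different atoms; indexing the
   entries by nat makes all such ordinal expressions reduce to numerals. *)
Lemma ord_fun_nat (T : Type) n (x : 'I_n.+1 -> T) :
  exists g : nat -> T, forall i, x i = g i.
Proof. by exists (fun i => x (inord i)) => i; rewrite inord_val. Qed.

Lemma mx_entries_nat (T : Type) m n (A : 'M[T]_(m.+1, n.+1)) :
  exists g : nat -> nat -> T, forall i j, A i j = g i j.
Proof. by exists (fun i j => A (inord i) (inord j)) => i j; rewrite !inord_val. Qed.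

Lemma det_mx33 (R : comNzRingType) (A : 'M[R]_3) :
  \det A = A 0 0 * A 1 1 * A 2 2 + A 0 1 * A 1 2 * A 2 0 + A 0 2 * A 1 0 * A 2 1
         - A 0 2 * A 1 1 * A 2 0 - A 0 1 * A 1 0 * A 2 2 - A 0 0 * A 1 2 * A 2 1.
Proof.
rewrite (expand_det_row _ 0) !big_ord_recl big_ord0 /cofactor.
rewrite !(expand_det_row _ 0) !big_ord_recl !big_ord0 /cofactor !det_mx11 !mxE.
have [g Ag] := mx_entries_nat A; rewrite !Ag /=; ring.
Qed.

Lemma char_poly_mx33 (R : comNzRingType) (A : 'M[R]_3) :
  char_poly A = 'X^3 - (\tr A)%:P * 'X^2
   + (A 0 0 * A 1 1 - A 0 1 * A 1 0 + A 0 0 * A 2 2 - A 0 2 * A 2 0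
      + A 1 1 * A 2 2 - A 1 2 * A 2 1)%:P * 'X - (\det A)%:P.
Proof.
rewrite /char_poly det_mx33 det_mx33 /mxtrace !big_ord_recl big_ord0 /char_poly_mx !mxE.
have [g Ag] := mx_entries_nat A; rewrite !Ag /=; ring.
Qed.

Lemma det_mx33_rank2 (R : comNzRingType) (a b c d : 'I_3 -> R) (M : 'M[R]_3) :
  (forall i j, M i j = a i * b j + c i * d j) -> \det M = 0.
Proof.
move=> HM; rewrite det_mx33 !HM.
have [ga Ha] := ord_fun_nat a; have [gb Hb] := ord_fun_nat b.
have [gc Hc] := ord_fun_nat c; have [gd Hd] := ord_fun_nat d.
rewrite !Ha !Hb !Hc !Hd /=; ring.
Qed.

Lemma char_poly_gram_rank2 (R : comNzRingType) (k : R) (a b c d : 'I_3 -> R)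
    (M : 'M[R]_3) :
  (forall i j, M i j = k * (a i * b j + c i * d j)) ->
  char_poly (M^T *m M) = 'X^3
    - (k ^+ 2 * (dot3 a a * dot3 b b + 2 * dot3 a c * dot3 b d
                 + dot3 c c * dot3 d d))%:P * 'X^2
    + (k ^+ 4 * ((dot3 a a * dot3 c c - dot3 a c ^+ 2)
                 * (dot3 b b * dot3 d d - dot3 b d ^+ 2)))%:P * 'X.
Proof.
move=> HM.
have detM : \det M = 0.
  apply: (@det_mx33_rank2 _ (fun i => k * a i) b (fun i => k * c i) d) => i j.
  by rewrite HM mulrDr !mulrA.
rewrite char_poly_mx33 det_mulmx det_tr detM mulr0 polyC0 subr0.
rewrite /mxtrace /dot3 !big_ord_recl !big_ord0 !mxE !big_ord_recl !big_ord0 !mxE !HM.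
have [ga Ha] := ord_fun_nat a; have [gb Hb] := ord_fun_nat b.
have [gc Hc] := ord_fun_nat c; have [gd Hd] := ord_fun_nat d.
rewrite !Ha !Hb !Hc !Hd /=; congr (_ - _%:P * _ + _%:P * _); ring.
Qed.

Lemma cubic_with_root0_factor (R : comNzRingType) (x y : R) :
  'X^3 - (x + y)%:P * 'X^2 + (x * y)%:P * 'X = ('X - x%:P) * ('X - y%:P) * 'X.
Proof. rewrite polyCD polyCM; ring. Qed.

Lemma mxtrace_tens (R : comPzRingType) m n (A : 'M[R]_m) (B : 'M[R]_n) :
  \tr (A *t B) = \tr A * \tr B.
Proof. by rewrite /mxtrace mulr_sum; apply: eq_bigr => k _; rewrite mxE. Qed.

Section Qubit.
Variable C : numClosedFieldType.
Implicit Types (u v : 'cV[C]_2) (P Q : 'M[C]_2).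

Lemma adjmxK m n (A : 'M[C]_(m, n)) : adjmx (adjmx A) = A.
Proof. by apply/matrixP => i j; rewrite !mxE conjCK. Qed.

Lemma adjmxM m n p (A : 'M[C]_(m, n)) (B : 'M[C]_(n, p)) :
  adjmx (A *m B) = adjmx B *m adjmx A.
Proof. by rewrite /adjmx /Defs.conjmx map_mxM trmx_mul. Qed.

Lemma adjmx_tr m n (A : 'M[C]_(m, n)) : adjmx A^T = (adjmx A)^T.
Proof. by apply/matrixP => i j; rewrite !mxE. Qed.

Lemma mxtrace_adj n (A : 'M[C]_n) : \tr (adjmx A) = (\tr A)^*.
Proof.
by rewrite /adjmx mxtrace_tr /mxtrace rmorph_sum; apply: eq_bigr => i _; rewrite mxE.
Qed.

Lemma adjmx_real m n (A : 'M[C]_(m, n)) :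
  (forall i j, (A i j)^* = A i j) -> adjmx A = A^T.
Proof. by move=> Areal; apply/matrixP => i j; rewrite !mxE Areal. Qed.

Lemma adjmx_pauli k : adjmx (pauli C k) = pauli C k.
Proof.
apply/matrixP => i j; rewrite /pauli !mxE.
case: k => [[|[|[|k]]] Hk] //; case: i => [[|[|i]] Hi] //; case: j => [[|[|j]] Hj] //=.
all: rewrite ?conjC0 ?conjC1 ?conjCN1 ?conjCi //.
by rewrite -conjCi conjCK.
Qed.

Lemma adjmx_ketbra u : adjmx (ketbra u) = ketbra u.
Proof. by rewrite /ketbra adjmxM adjmxK. Qed.

Definition bloch P (k : 'I_3) : C := \tr (P *m pauli C k).

Lemma bloch_conj P k : (bloch P k)^* = bloch (adjmx P) k.
Proof. by rewrite /bloch -mxtrace_adj adjmxM adjmx_pauli mxtrace_mulC. Qed.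

Lemma bloch_real P k : adjmx P = P -> (bloch P k)^* = bloch P k.
Proof. by move=> Pherm; rewrite bloch_conj Pherm. Qed.

Lemma bloch_dot P Q : dot3 (bloch P) (bloch Q) = 2 * \tr (P *m Q) - \tr P * \tr Q.
Proof.
rewrite /dot3 /bloch /mxtrace /pauli !big_ord_recl !big_ord0 !mxE.
rewrite !big_ord_recl !big_ord0 !mxE /=.
have [gP HP] := mx_entries_nat P; have [gQ HQ] := mx_entries_nat Q.
rewrite !HP !HQ /=; have sqrCi := @sqrCi C; ring: sqrCi.
Qed.

Lemma bloch_dot_tr P Q : dot3 (bloch P^T) (bloch Q^T) = dot3 (bloch P) (bloch Q).
Proof. by rewrite !bloch_dot -trmx_mul !mxtrace_tr mxtrace_mulC. Qed.

Lemma adjmx_mul_cV u v : adjmx u *m v = (braket u v)%:M.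
Proof.
by rewrite [LHS]mx11_scalar !mxE; congr _%:M; apply: eq_bigr => i _; rewrite !mxE.
Qed.

Lemma mxtrace_ketbra u : \tr (ketbra u) = braket u u.
Proof. by rewrite /ketbra mxtrace_mulC adjmx_mul_cV trace_mx11 mxE. Qed.

Lemma mxtrace_ketbraM u v : \tr (ketbra u *m ketbra v) = braket u v * braket v u.
Proof.
rewrite /ketbra mulmxA -(mulmxA u) adjmx_mul_cV mul_mx_scalar -scalemxAl mxtraceZ.
by rewrite mxtrace_mulC adjmx_mul_cV trace_mx11 mxE.
Qed.

Lemma braket_conj u v : (braket u v)^* = braket v u.
Proof.
by rewrite /braket rmorph_sum; apply: eq_bigr => i _; rewrite rmorphM /= conjCK mulrC.
Qed.

Lemma braket_lagrange u v :
  braket u u * braket v v - `|braket u v| ^+ 2 = `|u 0 0 * v 1 0 - u 1 0 * v 0 0| ^+ 2.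
Proof.
rewrite !normCK braket_conj /braket !big_ord_recl !big_ord0 /=.
rewrite !(rmorphD, rmorphM, rmorphN, rmorph0) /= ?conjCK.
have [gu Hu] := mx_entries_nat u; have [gv Hv] := mx_entries_nat v.
rewrite !Hu !Hv /=; ring.
Qed.

Lemma braket_cauchy_schwarz u v : `|braket u v| ^+ 2 <= braket u u * braket v v.
Proof. by rewrite -subr_ge0 braket_lagrange exprn_ge0. Qed.

Lemma unit_vec_braket_le1 u v : unit_vec u -> unit_vec v -> `|braket u v| ^+ 2 <= 1.
Proof. by move=> u1 v1; have := braket_cauchy_schwarz u v; rewrite u1 v1 mulr1. Qed.

Lemma corr_mx_sum_tens (k : C) P1 Q1 P2 Q2 i j :
  corr_mx (k *: (P1 *t Q1 + P2 *t Q2)) i j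
  = k * (bloch P1 i * bloch Q1 j + bloch P2 i * bloch Q2 j).
Proof. by rewrite mxE -scalemxAl mulmxDl !tensmx_mul mxtraceZ mxtraceD !mxtrace_tens. Qed.

End Qubit.

Theorem proposition9 (C : numClosedFieldType) (psi phi e f : 'cV[C]_2) :
  unit_vec psi -> unit_vec phi -> unit_vec e -> unit_vec f ->
  let tau : 'M[C]_(2 * 2) :=
    2^-1 *: ((ketbra psi)^T *t ketbra e + (ketbra phi)^T *t ketbra f) in
  singular_values (corr_mx tau)
    [tuple `|braket psi phi| * `|braket e f|;
           sqrtC ((1 - `|braket psi phi| ^+ 2) * (1 - `|braket e f| ^+ 2));
           0].
Proof.
move=> psi1 phi1 e1 f1 tau.
have N_real : adjmx (corr_mx tau) = (corr_mx tau)^T.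
  apply: adjmx_real => i j; rewrite corr_mx_sum_tens rmorphM rmorphD !rmorphM /=.
  by rewrite fmorphV rmorph_nat !bloch_real ?adjmx_tr ?adjmx_ketbra.
split.
  case=> [[|[|[|i]]] Hi] //; rewrite (tnth_nth 0) /=; first by rewrite mulr_ge0.
  by rewrite sqrtC_ge0 mulr_ge0 // subr_ge0 unit_vec_braket_le1.
rewrite N_real (char_poly_gram_rank2 (corr_mx_sum_tens _ _ _ _ _)).
rewrite !bloch_dot_tr !bloch_dot !mxtrace_ketbraM !mxtrace_ketbra psi1 phi1 e1 f1.
rewrite !big_ord_recl big_ord0 !(tnth_nth 0) /= sqrtCK exprMn !normCK !braket_conj.
rewrite expr0n polyC0 subr0 [in RHS]mulr1 [in RHS]mulrA -cubic_with_root0_factor.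
have two_neq0 : (2 : C) != 0 by rewrite pnatr_eq0.
by congr (_ - _%:P * _ + _%:P * _); field.
Qed.
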